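(* Let $G=(V=[n],E,(p_{uv})_{(u,v)\in E})$ be an influence graph, $k\in\{2,\dots,n\}$, $\pi$ an optimal adaptive policy with $|\pi|=k$, and $x_v$ the probability that node $v$ is selected by $\pi$. Then for every partial realisation $\psi$, $$\mathbb{E}_{\mathbf L,\hat{\mathbf L}}\big[\sigma^2_{\mathbf L,\hat{\mathbf L},\psi}(dom(\psi)\cup dom(\hat\Psi_\pi))\,\big|\,\psi\subseteq\Phi\big]\le\mathbb{E}_{\mathbf L}\big[\sigma_{\mathbf L}(dom(\psi))\,\big|\,\psi\subseteq\Phi\big]+\sum_{v\in V\setminus dom(\psi)}x_v\,\Delta^2_\psi(v).$$
   Context: $G$ is a directed graph with activation probabilities $p_{uv}\in[0,1]$. $\mathbf L,\hat{\mathbf L}$ are independent random subsets of $E$, each containing every edge $(u,w)$ independently with probability $p_{uw}$. For $L\subseteq E$, $T\subseteq V$, $\sigma_L(T)$ is the number of nodes reachable by a directed path (length $\ge0$) in $(V,L)$ from $T$. For $T\subseteq V$, $\mathbf L^2(T):=\mathbf L\cup(\hat{\mathbf L}\cap\{(u,w)\in E:u\in T\})$. Realisations: $\Phi(u):=\{u\}\cup\{z:(u,z)\in\mathbf L\}$, $\hat\Phi(u):=\{u\}\cup\{z:(u,z)\in\hat{\mathbf L}\}$. A partial realisation $\psi$ is the restriction of $u\mapsto\{u\}\cup\{z:(u,z)\in L\}$ (for some $L\subseteq E$) to a set $dom(\psi)\subseteq V$; $\psi\subseteq\Phi$ is the event $\Phi(u)=\psi(u)$ for all $u\in dom(\psi)$.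 For $T\subseteq V$, $\sigma^2_{\mathbf L,\hat{\mathbf L},\psi}(T):=\sigma_{\mathbf L^2(T\setminus dom(\psi))}(T)$, and $\Delta^2_\psi(v):=\mathbb{E}[\sigma^2_{\mathbf L,\hat{\mathbf L},\psi}(\{v\}\cup dom(\psi))-\sigma^2_{\mathbf L,\hat{\mathbf L},\psi}(dom(\psi))\mid\psi\subseteq\Phi]$ (conditioning on events of positive probability). An adaptive policy $\pi$ maps partial realisations to a node or STOP; it is run from the empty realisation, and while $\pi(\psi')=v\ne$ STOP it sets $\psi'\leftarrow\psi'\cup\{(v,\Phi(v))\}$, ending with $\Psi_\pi$; $\sigma(\pi):=\mathbb{E}[\sigma_{\mathbf L}(dom(\Psi_\pi))]$; $|\pi|=k$ means $|dom(\Psi_\pi)|=k$ always; $\pi$ is optimal if it maximizes $\sigma(\pi)$ among policies with $|\pi|=k$. $\hat\Psi_\pi$ is the final partial realisation when $\pi$ is run with feedback $\hat\Phi(v)$ in place of $\Phi(v)$. *)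

From HB Require Import structures.
From mathcomp Require Import all_boot all_order all_algebra.
Set Implicit Arguments. Unset Strict Implicit. Unset Printing Implicit Defensive.
Import Order.TTheory GRing.Theory Num.Theory.
Local Open Scope ring_scope.

Section Influence.
Variables (R : realFieldType) (n : nat).
Notation V := 'I_n.
Notation Edge := (V * V)%type.
Variables (E : {set Edge}) (p : Edge -> R).

Definition prL (L : {set Edge}) : R :=
  if L \subset E then \prod_(e in E) (if e \in L then p e else 1 - p e) else 0.

Definition sigma (L : {set Edge}) (T : {set V}) : nat :=
  #|[set w | [exists t in T, connect (fun u z => (u, z) \in L) t w]]|.

Definition realis (L : {set Edge}) (u : V) : {set V} :=
  u |: [set z | (u, z) \in L].

Definition PR := {ffun V -> option {set V}}.
Definition dom (psi : PR) : {set V} := [set u | psi u != None].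
Definition empty_pr : PR := [ffun => None].
Definition valid_pr (psi : PR) : Prop :=
  exists2 L : {set Edge}, L \subset E & forall u, u \in dom psi -> psi u = Some (realis L u).

Definition consistent (psi : PR) (L : {set Edge}) : bool :=
  [forall u in dom psi, psi u == Some (realis L u)].

(* adaptive policies: partial realisation -> node (Some v) or STOP (None) *)
Definition policy := PR -> option V.

Definition extend (psi : PR) (v : V) (S : {set V}) : PR :=
  [ffun u => if u == v then Some S else psi u].

Fixpoint run_fuel (pi : policy) (L : {set Edge}) (m : nat) (psi : PR) : option PR :=
  match m with
  | 0 => None
  | m'.+1 => match pi psi with
             | None => Some psi
             | Some v => run_fuel pi L m' (extend psi v (realis L v))
             end
  end.

(* A run that stops performs at most n distinct selections (a repeated
   selection leaves the state unchanged, hence loops forever), so n.+1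
   policy calls suffice: run = None iff the policy never stops. *)
Definition run (pi : policy) (L : {set Edge}) : option PR :=
  run_fuel pi L n.+1 empty_pr.

Definition Psi (pi : policy) (L : {set Edge}) : PR := odflt empty_pr (run pi L).

Definition pol_size (pi : policy) (k : nat) : Prop :=
  forall L : {set Edge}, L \subset E ->
    exists2 psi, run pi L = Some psi & #|dom psi| = k.

Definition sigma_pol (pi : policy) : R :=
  \sum_(L : {set Edge}) prL L * (sigma L (dom (Psi pi L)))%:R.

Definition optimal (pi : policy) (k : nat) : Prop :=
  pol_size pi k /\ forall pi', pol_size pi' k -> sigma_pol pi' <= sigma_pol pi.

Definition xsel (pi : policy) (v : V) : R :=
  \sum_(L : {set Edge}) prL L * (v \in dom (Psi pi L))%:R.

Definition prob_cons (psi : PR) : R :=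
  \sum_(L : {set Edge}) prL L * (consistent psi L)%:R.

Definition L2 (L Lh : {set Edge}) (S : {set V}) : {set Edge} :=
  L :|: (Lh :&: [set e in E | e.1 \in S]).

Definition sigma2 (L Lh : {set Edge}) (psi : PR) (T : {set V}) : nat :=
  sigma (L2 L Lh (T :\: dom psi)) T.

Definition cond_exp2 (psi : PR) (X : {set Edge} -> {set Edge} -> R) : R :=
  (\sum_(L : {set Edge}) \sum_(Lh : {set Edge})
      prL L * prL Lh * (consistent psi L)%:R * X L Lh) / prob_cons psi.

Definition cond_exp1 (psi : PR) (X : {set Edge} -> R) : R :=
  (\sum_(L : {set Edge}) prL L * (consistent psi L)%:R * X L) / prob_cons psi.

Definition Delta2 (psi : PR) (v : V) : R :=
  cond_exp2 psi (fun L Lh => (sigma2 L Lh psi (v |: dom psi))%:R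
                              - (sigma2 L Lh psi (dom psi))%:R).

End Influence.

From Pilot Require Import Defs.
From HB Require Import structures.
From mathcomp Require Import all_boot all_order all_algebra.
From mathcomp Require Import ring.
Set Implicit Arguments. Unset Strict Implicit. Unset Printing Implicit Defensive.
Import Order.TTheory GRing.Theory Num.Theory.
Local Open Scope ring_scope.

(* Fix the two edge sets L, Lh and let S be the set selected by pi on the
   feedback Lh.  Every node reached from dom psi ∪ S in L^2 is reached from
   dom psi in L, or, cutting a path at its last Lh-edge, from v ∪ dom psi in
   L^2({v}) for some v in S \ dom psi; so sigma^2(dom psi ∪ S) is at most
   sigma_L(dom psi) plus the marginal gains of these v.  Averaging, the gain of
   v depends on Lh only through the out-edges of v, while whether pi selects v
   does not depend on them (the run is identical until v is chosen), so the
   two factors are independent and the expectation of their product is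
   x_v Delta^2_psi(v). *)

Section Runs.
Variable n : nat.
Notation V := 'I_n.
Notation Edge := (V * V)%type.

Definition out_edges (v : V) : {set Edge} := [set e | e.1 == v].

Lemma realisD_out_edges (L : {set Edge}) (u v : V) :
  u != v -> realis (L :\: out_edges v) u = realis L u.
Proof.
by move=> uv; congr (_ |: _); apply/setP => z; rewrite !inE /= (negbTE uv).
Qed.

Lemma dom_extend (psi : PR n) v S : dom (extend psi v S) = v |: dom psi.
Proof. by apply/setP => u; rewrite /dom !inE ffunE; case: (u =P v). Qed.

Lemma run_fuel_dom_subset (pi : policy n) L m psi r :
  run_fuel pi L m psi = Some r -> dom psi \subset dom r.
Proof.
elim: m psi => [|m IH] psi //=; case: (pi psi) => [v|]; last by case=> <-.
by move=> /IH; apply: subset_trans; rewrite dom_extend subsetUr.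
Qed.

(* Both runs coincide until v is selected, and v stays selected afterwards. *)
Lemma mem_dom_run_fuel_eq (pi : policy n) L L' v m psi r r' :
  (forall u, u != v -> realis L u = realis L' u) ->
  run_fuel pi L m psi = Some r -> run_fuel pi L' m psi = Some r' ->
  (v \in dom r) = (v \in dom r').
Proof.
move=> eqL; elim: m psi => [|m IH] psi //=.
case: (pi psi) => [u|]; last by move=> [<-] [<-].
have [->|uv] := eqVneq u v; last by rewrite eqL //; apply: IH.
move=> /run_fuel_dom_subset sub /run_fuel_dom_subset sub'.
have v_ext S : v \in dom (extend psi v S) by rewrite dom_extend setU11.
by rewrite (subsetP sub _ (v_ext _)) (subsetP sub' _ (v_ext _)).
Qed.

Lemma mem_dom_PsiD_out_edges (E : {set Edge}) (pi : policy n) (L : {set Edge}) v :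
  (forall L0 : {set Edge}, L0 \subset E -> run pi L0 != None) -> L \subset E ->
  (v \in dom (Psi pi (L :\: out_edges v))) = (v \in dom (Psi pi L)).
Proof.
move=> stops LE; have L'E : L :\: out_edges v \subset E.
  exact: subset_trans (subsetDl _ _) LE.
rewrite /Psi; case r_L: (run pi L) (stops _ LE) => [r|] // _.
case r_L': (run pi _) (stops _ L'E) => [r'|] // _ /=.
exact: mem_dom_run_fuel_eq (fun u uv => realisD_out_edges L uv) r_L' r_L.
Qed.

End Runs.

Lemma card_setU_bigcup_le (T I : finType) (A : {set T}) (P : pred I)
    (B : I -> {set T}) :
  (#|A :|: \bigcup_(i | P i) B i| <= #|A| + \sum_(i | P i) #|B i :\: A|)%N.
Proof.
have -> : A :|: \bigcup_(i | P i) B i = A :|: (\bigcup_(i | P i) B i) :\: A.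
  by apply/setP => x; rewrite !inE; case: (x \in A).
apply: leq_trans (leq_card_setU _ _) _; rewrite leq_add2l.
apply: (big_ind2 (fun (X : {set T}) m => #|X :\: A| <= m)%N) => //.
- by rewrite set0D cards0.
- move=> X1 m1 X2 m2 le1 le2; rewrite setDUl.
  exact: leq_trans (leq_card_setU _ _) (leq_add le1 le2).
Qed.

Section Reach.
Variable n : nat.
Notation V := 'I_n.
Notation Edge := (V * V)%type.
Variable E : {set Edge}.

Definition edge_rel (L : {set Edge}) : rel V := fun u z => (u, z) \in L.

Definition reach (L : {set Edge}) (T : {set V}) : {set V} :=
  [set w | [exists t in T, connect (edge_rel L) t w]].

Lemma sigmaE L T : sigma L T = #|reach L T|. Proof. by []. Qed.

Lemma connect_edge_rel_mono (L L' : {set Edge}) :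
  L \subset L' -> subrel (connect (edge_rel L)) (connect (edge_rel L')).
Proof.
by move=> sLL'; apply: connect_sub => u z uz; apply: connect1; exact: (subsetP sLL').
Qed.

Lemma reach_mono (L L' : {set Edge}) (D D' : {set V}) :
  L \subset L' -> D \subset D' -> reach L D \subset reach L' D'.
Proof.
move=> sL sD; apply/subsetP => w; rewrite !inE => /existsP [t /andP [tD tw]].
by apply/existsP; exists t; rewrite (subsetP sD _ tD) (connect_edge_rel_mono sL).
Qed.

Lemma L2_subset (L Lh : {set Edge}) (Y : {set V}) : L \subset L2 E L Lh Y.
Proof. exact: subsetUl. Qed.

Lemma L2_set0 (L Lh : {set Edge}) : L2 E L Lh set0 = L.
Proof. by apply/setP => e; rewrite /L2 !inE !andbF orbF. Qed.

Lemma L2_out_edges (L Lh : {set Edge}) (Y : {set V}) v :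
  Y \subset [set v] -> L2 E L Lh Y = L2 E L (Lh :&: out_edges v) Y.
Proof.
move=> Yv; rewrite /L2 /out_edges; congr (_ :|: _); apply/setP => e; rewrite !inE.
case eY: (e.1 \in Y); last by rewrite !andbF.
by move: (subsetP Yv _ eY); rewrite inE => ev; rewrite ev !andbT.
Qed.

(* Cut the path at its last Lh-edge: it leaves some v in Y, and the rest of
   the path lies in L. *)
Lemma L2_path_split (L Lh : {set Edge}) (Y : {set V}) w x q :
  path (edge_rel (L2 E L Lh Y)) x q -> w = last x q ->
  connect (edge_rel L) x w \/
  exists2 v, v \in Y & connect (edge_rel (L2 E L Lh [set v])) v w.
Proof.
elim: q x => [|y q IH] x /=; first by move=> _ ->; left.
move=> /andP [xy yq] lastw; case: (IH y yq lastw) => [yw|]; last by right.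
move: xy; rewrite /edge_rel /L2 !inE /= => /orP [xyL | /and3P [xyLh xyE xY]].
  by left; apply: connect_trans (connect1 _) yw.
right; exists x => //; apply: (connect_trans (y := y)).
  by apply: connect1; rewrite /edge_rel /L2 !inE /= xyLh xyE eqxx orbT.
exact: connect_edge_rel_mono (L2_subset _ _ _) _ _ yw.
Qed.

Lemma reach_L2_subset (L Lh : {set Edge}) (D Y : {set V}) :
  reach (L2 E L Lh Y) (D :|: Y) \subset
  reach L D :|: \bigcup_(v in Y) reach (L2 E L Lh [set v]) (v |: D).
Proof.
apply/subsetP => w; rewrite inE => /existsP [t /andP [tDY /connectP [q tq lastw]]].
rewrite inE; case: (L2_path_split tq lastw) => [tw | [v vY vw]]; last first.
  apply/orP; right; apply/bigcupP; exists v; rewrite // inE.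
  by apply/existsP; exists v; rewrite setU11.
move: tDY; rewrite inE => /orP [tD | tY].
  by apply/orP; left; rewrite inE; apply/existsP; exists t; rewrite tD.
apply/orP; right; apply/bigcupP; exists t; rewrite // inE; apply/existsP; exists t.
by rewrite setU11 (connect_edge_rel_mono (L2_subset _ _ _)).
Qed.

Section Sigma2.
Variables (L Lh : {set Edge}) (psi : PR n).
Notation D := (dom psi).
Notation sigma2 := (sigma2 E L Lh psi).

Lemma sigma2_dom : sigma2 D = sigma L D.
Proof. by rewrite /sigma2 setDv L2_set0. Qed.

Lemma sigma2_setU1 v : v \notin D -> sigma2 (v |: D) = sigma (L2 E L Lh [set v]) (v |: D).
Proof.
move=> vD; rewrite /Defs.sigma2 setDUl setDv setU0.
by congr (sigma (L2 _ _ _ _) _); apply/setDidPl; rewrite disjoints1.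
Qed.

Lemma reach_dom_subset v : reach L D \subset reach (L2 E L Lh [set v]) (v |: D).
Proof. by apply: reach_mono; [exact: L2_subset | exact: subsetUr]. Qed.

Lemma sigma2_setU_le S :
  (sigma2 (D :|: S) <= sigma2 D + \sum_(v in S :\: D) (sigma2 (v |: D) - sigma2 D))%N.
Proof.
have -> : sigma2 (D :|: S) = sigma (L2 E L Lh (S :\: D)) (D :|: S :\: D).
  rewrite /Defs.sigma2 setDUl setDv set0U; congr sigma.
  by apply/setP => x; rewrite !in_setU in_setD; case: (x \in D).
rewrite sigma2_dom sigmaE; apply: leq_trans (subset_leq_card (reach_L2_subset _ _ _ _)) _.
apply: leq_trans (card_setU_bigcup_le _ _ _) _; rewrite leq_add2l.
apply/eq_leq/eq_bigr => v; rewrite inE => /andP [vD _].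
by rewrite sigma2_setU1 // !sigmaE cardsD (setIidPr (reach_dom_subset v)).
Qed.

Lemma sigma2_setU_ler (R : numDomainType) S :
  ((sigma2 (D :|: S))%:R : R) <= (sigma L D)%:R +
    \sum_(v in ~: D) (v \in S)%:R * ((sigma2 (v |: D))%:R - (sigma2 D)%:R).
Proof.
have -> : \sum_(v in ~: D) (v \in S)%:R * ((sigma2 (v |: D))%:R - (sigma2 D)%:R)
    = \sum_(v in S :\: D) ((sigma2 (v |: D) - sigma2 D)%N%:R : R).
  rewrite big_mkcond [RHS]big_mkcond; apply: eq_bigr => v _.
  rewrite in_setC in_setD; case vD: (v \in D); case: (v \in S); rewrite /= ?mul0r ?mul1r //.
  by rewrite natrB // sigma2_setU1 ?vD // sigma2_dom !sigmaE subset_leq_card ?reach_dom_subset.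
by rewrite -sigma2_dom -natr_sum -natrD ler_nat sigma2_setU_le.
Qed.

Lemma sigma2_out_edges T v :
  T :\: D \subset [set v] -> sigma2 T = Defs.sigma2 E L (Lh :&: out_edges v) psi T.
Proof. by move=> Tv; rewrite /Defs.sigma2 (L2_out_edges _ _ Tv). Qed.

End Sigma2.
End Reach.

Section EdgeDistribution.
Variables (R : realFieldType) (n : nat) (p : 'I_n * 'I_n -> R).
Notation Edge := ('I_n * 'I_n)%type.

Definition expect (E : {set Edge}) (f : {set Edge} -> R) : R :=
  \sum_(L : {set Edge}) prL E p L * f L.

Lemma prL_eq0 (E L : {set Edge}) : ~~ (L \subset E) -> prL E p L = 0.
Proof. by rewrite /prL => /negbTE ->. Qed.

Lemma prL_ge0 (E L : {set Edge}) :
  (forall e, e \in E -> 0 <= p e <= 1) -> 0 <= prL E p L.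
Proof.
move=> hp; rewrite /prL; case: ifP => // _; apply: prodr_ge0 => e /hp /andP [p0 p1].
by case: (e \in L); rewrite ?subr_ge0.
Qed.

Definition edge_weight (E : {set Edge}) (e : Edge) (b : bool) : R :=
  if e \in E then (if b then p e else 1 - p e) else (b == false)%:R.

Lemma prL_prod (E L : {set Edge}) :
  prL E p L = \prod_(e : Edge) edge_weight E e (e \in L).
Proof.
rewrite (bigID (mem E)) /= /prL.
under [X in _ = X * _]eq_bigr => e eE do rewrite /edge_weight eE.
case: (boolP (L \subset E)) => [LE | /subsetPn [e eL eE]].
  rewrite [X in _ = _ * X]big1 ?mulr1 // => e eE; rewrite /edge_weight (negbTE eE).
  by case: (boolP (e \in L)) => // /(subsetP LE); rewrite (negbTE eE).
by rewrite [X in _ = _ * X](bigD1 e) //= {1}/edge_weight (negbTE eE) eL mul0r mulr0.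
Qed.

Lemma sum_prL (E : {set Edge}) : \sum_(L : {set Edge}) prL E p L = 1.
Proof.
have <- : \prod_(e : Edge) \sum_(b : bool) edge_weight E e b = 1.
  rewrite big1 // => e _; rewrite big_bool /edge_weight.
  by case: (e \in E); rewrite /= ?(addrC (p e)) ?subrK ?add0r.
rewrite bigA_distr_bigA /= (reindex (fun f : {ffun Edge -> bool} => [set e | f e])) /=.
  by apply: eq_bigr => f _; rewrite prL_prod; apply: eq_bigr => e _; rewrite inE.
exists (fun L : {set Edge} => [ffun e => e \in L]) => [f _ | L _].
  by apply/ffunP => e; rewrite ffunE inE.
by apply/setP => e; rewrite inE ffunE.
Qed.

Lemma expect_cst (E : {set Edge}) c : expect E (fun _ => c) = c.
Proof. by rewrite /expect -mulr_suml sum_prL mul1r. Qed.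

Lemma expect_powerset (E O : {set Edge}) (f : {set Edge} -> R) : E \subset O ->
  \sum_(A in powerset O) prL E p A * f A = expect E f.
Proof.
move=> EO; rewrite /expect [RHS](bigID (mem (powerset O))) /=.
rewrite [X in _ = _ + X]big1 ?addr0 // => A; rewrite powersetE => AO.
by rewrite prL_eq0 ?mul0r //; apply: contra AO => /subset_trans; apply.
Qed.

Section Split.
Variables (O A B : {set Edge}).
Hypotheses (AO : A \subset O) (BO : B \subset ~: O).

Lemma setIU_split : (A :|: B) :&: O = A.
Proof.
rewrite setIUl (setIidPl AO); apply/setUidPl.
by have := BO; rewrite -disjoints_subset -setI_eq0 => /eqP ->; rewrite sub0set.
Qed.

Lemma setDU_split : (A :|: B) :\: O = B.
Proof.
rewrite setDUl.
have /eqP -> : A :\: O == set0 by rewrite setD_eq0.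
by rewrite set0U; apply/setDidPl; rewrite disjoints_subset.
Qed.

Lemma prL_setU_split (E : {set Edge}) :
  prL E p (A :|: B) = prL (E :&: O) p A * prL (E :\: O) p B.
Proof.
rewrite /prL subUset subsetI AO andbT setDE subsetI BO andbT.
case: (A \subset E); last by rewrite mul0r.
case: (B \subset E); last by rewrite mulr0.
rewrite /= (bigID (mem O)) /=; congr (_ * _); apply: eq_big => e; rewrite ?inE //.
  move=> /andP [_ eO]; have := subsetP BO e; rewrite inE eO.
  by case: (e \in B) => [/(_ isT) // | _]; rewrite orbF.
move=> /andP [_ eO]; have := subsetP AO e; rewrite (negbTE eO).
by case: (e \in A) => [/(_ isT) // | _].
Qed.

End Split.

Lemma sum_setU_split (O : {set Edge}) (F : {set Edge} -> R) :
  \sum_(L : {set Edge}) F L =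
  \sum_(A in powerset O) \sum_(B in powerset (~: O)) F (A :|: B).
Proof.
rewrite pair_big_dep /= (reindex (fun L => (L :&: O, L :\: O))) /=.
  apply: eq_big => L; last by rewrite setID.
  by rewrite !powersetE subsetIr setDE subsetIr.
exists (fun q => q.1 :|: q.2) => [L _ | [A B]]; first by rewrite /= setID.
by rewrite inE /= !powersetE => /andP [AO BO]; rewrite setIU_split ?setDU_split.
Qed.

Lemma expect_split (E O : {set Edge}) (f g : {set Edge} -> R) :
  (forall L : {set Edge}, L \subset E -> f L = f (L :\: O)) ->
  (forall L : {set Edge}, g L = g (L :&: O)) ->
  expect E (fun L => f L * g L) = expect (E :&: O) g * expect (E :\: O) f.
Proof.
move=> f_out g_in.
rewrite -(expect_powerset g (subsetIr E O)) -(expect_powerset f (subsetDr E O)).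
rewrite /expect (sum_setU_split O) big_distrl; apply: eq_bigr => A; rewrite powersetE => AO.
rewrite big_distrr; apply: eq_bigr => B; rewrite powersetE => BO /=.
rewrite (prL_setU_split AO BO).
have [AE | /prL_eq0 ->] := boolP (A \subset E :&: O); last by rewrite !mul0r.
have [BE | /prL_eq0 ->] := boolP (B \subset E :\: O); last by rewrite mulr0 !mul0r mulr0.
have ABE : A :|: B \subset E.
  by rewrite subUset (subset_trans AE (subsetIl _ _)) (subset_trans BE (subsetDl _ _)).
rewrite f_out // g_in setIU_split // setDU_split //; ring.
Qed.

Lemma expect_mul_indep (E O : {set Edge}) (f g : {set Edge} -> R) :
  (forall L : {set Edge}, L \subset E -> f L = f (L :\: O)) ->
  (forall L : {set Edge}, g L = g (L :&: O)) ->
  expect E (fun L => f L * g L) = expect E f * expect E g.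
Proof.
move=> f_out g_in; have Ef : expect E f = expect (E :\: O) f.
  rewrite -[RHS]mul1r -(expect_cst (E :&: O) 1) -expect_split //.
  by apply: eq_bigr => L _; rewrite mulr1.
have Eg : expect E g = expect (E :&: O) g.
  rewrite -[RHS]mulr1 -(expect_cst (E :\: O) 1) -(@expect_split E O (fun _ => 1)) //.
  by apply: eq_bigr => L _; rewrite mul1r.
by rewrite (expect_split f_out g_in) Ef Eg mulrC.
Qed.

End EdgeDistribution.

Section ConditionalExpectation.
Variables (R : realFieldType) (n : nat) (E : {set 'I_n * 'I_n}) (p : 'I_n * 'I_n -> R).
Notation Edge := ('I_n * 'I_n)%type.
Variable psi : PR n.

Lemma cond_exp2E (X : {set Edge} -> {set Edge} -> R) :
  cond_exp2 E p psi X =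
  (\sum_(L : {set Edge}) prL E p L * (consistent psi L)%:R * expect p E (X L))
    / prob_cons E p psi.
Proof.
congr (_ / _); apply: eq_bigr => L _; rewrite /expect mulr_sumr.
by apply: eq_bigr => Lh _; rewrite -mulrA mulrACA.
Qed.

Lemma cond_exp1E (X : {set Edge} -> R) :
  cond_exp1 E p psi X = cond_exp2 E p psi (fun L _ => X L).
Proof. by rewrite cond_exp2E; under [in RHS]eq_bigr do rewrite expect_cst. Qed.

Lemma cond_exp2D (X Y : {set Edge} -> {set Edge} -> R) :
  cond_exp2 E p psi (fun L Lh => X L Lh + Y L Lh) =
  cond_exp2 E p psi X + cond_exp2 E p psi Y.
Proof.
rewrite /cond_exp2 -mulrDl -big_split; congr (_ / _); apply: eq_bigr => L _.
by rewrite -big_split; apply: eq_bigr => Lh _; rewrite mulrDr.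
Qed.

Lemma cond_exp2_sum (I : finType) (A : {pred I})
    (F : I -> {set Edge} -> {set Edge} -> R) :
  cond_exp2 E p psi (fun L Lh => \sum_(i in A) F i L Lh) =
  \sum_(i in A) cond_exp2 E p psi (F i).
Proof.
rewrite /cond_exp2 -mulr_suml; congr (_ / _); rewrite [RHS]exchange_big.
apply: eq_bigr => L _; rewrite [RHS]exchange_big; apply: eq_bigr => Lh _.
by rewrite mulr_sumr.
Qed.

Lemma ler_cond_exp2 (X Y : {set Edge} -> {set Edge} -> R) :
  (forall e, e \in E -> 0 <= p e <= 1) -> (forall L Lh, X L Lh <= Y L Lh) ->
  cond_exp2 E p psi X <= cond_exp2 E p psi Y.
Proof.
move=> hp XY; have w_ge0 L : 0 <= prL E p L * (consistent psi L)%:R.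
  by rewrite mulr_ge0 ?prL_ge0.
rewrite /cond_exp2 ler_wpM2r ?invr_ge0 ?sumr_ge0 //.
apply: ler_sum => L _; apply: ler_sum => Lh _; rewrite ler_wpM2l //.
by rewrite mulrAC mulr_ge0 ?prL_ge0.
Qed.

Section Selection.
Variable pi : policy n.
Hypothesis stops : forall L : {set Edge}, L \subset E -> run pi L != None.

Lemma xsel_mul_cond_exp2 v (c : {set Edge} -> {set Edge} -> R) :
  (forall L Lh, c L Lh = c L (Lh :&: out_edges v)) ->
  xsel E p pi v * cond_exp2 E p psi c =
  cond_exp2 E p psi (fun L Lh => (v \in dom (Psi pi Lh))%:R * c L Lh).
Proof.
move=> c_out; rewrite !cond_exp2E mulrA mulr_sumr; congr (_ / _).
apply: eq_bigr => L _; rewrite mulrCA; congr (_ * _).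
rewrite (expect_mul_indep p (O := out_edges v)) // => Lh LhE.
by rewrite (mem_dom_PsiD_out_edges _ stops LhE).
Qed.

End Selection.
End ConditionalExpectation.

Theorem lemma16 (R : realFieldType) (n : nat) (E : {set 'I_n * 'I_n})
    (p : 'I_n * 'I_n -> R)
    (hp : forall e, e \in E -> 0 <= p e <= 1)
    (k : nat) (hk : (2 <= k <= n)%N)
    (pi : policy n) (hopt : optimal E p pi k)
    (psi : PR n) (hpsi : valid_pr E psi) (hpos : 0 < prob_cons E p psi) :
  cond_exp2 E p psi
      (fun L Lh => (sigma2 E L Lh psi (dom psi :|: dom (Psi pi Lh)))%:R)
  <= cond_exp1 E p psi (fun L => (sigma L (dom psi))%:R)
     + \sum_(v in ~: dom psi) xsel E p pi v * Delta2 E p psi v.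
Proof.
have stops (L : {set 'I_n * 'I_n}) : L \subset E -> run pi L != None.
  by case/hopt.1 => r -> _.
have sel v : xsel E p pi v * Delta2 E p psi v =
    cond_exp2 E p psi (fun L Lh => (v \in dom (Psi pi Lh))%:R *
      ((sigma2 E L Lh psi (v |: dom psi))%:R - (sigma2 E L Lh psi (dom psi))%:R)).
  rewrite /Delta2; apply: (xsel_mul_cond_exp2 _ _ stops) => L Lh.
  have vD : (v |: dom psi) :\: dom psi \subset [set v].
    by rewrite setDUl setDv setU0 subsetDl.
  have D0 : dom psi :\: dom psi \subset [set v] by rewrite setDv sub0set.
  by rewrite (sigma2_out_edges _ _ _ vD) (sigma2_out_edges _ _ _ D0).
rewrite (eq_bigr _ (fun v _ => sel v)) -cond_exp2_sum cond_exp1E -cond_exp2D.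
by apply: ler_cond_exp2 => // L Lh; apply: sigma2_setU_ler.
Qed.
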